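(* Let $X$ be a non-trivial separated locally convex space with topology $\sigma(X,X^* )$, let $T$ be an arbitrary index set and let $f,g,h_t:X\to\overline{\mathbb{R}}$ ($t\in T$) be proper convex functions. Let $A=\{x\in X: h_t(x)\le 0\ \text{for all } t\in T\}$ and consider $$(P)\qquad \inf_{x\in A}\{f(x)-g(x)\},\qquad (\overline{D}_L)\qquad \sup_{\lambda\in\mathbb{R}^{(T)}_+}\ \inf_{(u^*,v^*,\gamma)\in W}\{g^c(u^*,v^*,\gamma)-(f+\lambda h)^c(u^*,v^*,\gamma)\}.$$ If $(P)$ is solvable and has an optimal solution $x_0$ with $\partial_c g(x_0)\neq\emptyset$, then weak duality holds for $(P)$–$(\overline{D}_L)$, i.e. $v(P)\ge v(\overline{D}_L)$.
   Context: $X^*$ is the topological dual of $X$, $\langle x,x^*\rangle$ the pairing, and $W:=X^*\times X^*\times\mathbb{R}$. The coupling function $c:X\times W\to\overline{\mathbb{R}}$ is $c(x,(x^*,y^*,\alpha))=\langle x,x^*\rangle$ if $\langle x,y^*\rangle<\alpha$ and $+\infty$ otherwise. For $\varphi:X\to\overline{\mathbb{R}}$, $\varphi^c(w):=\sup_{x\in X}\{c(x,w)-\varphi(x)\}$ ($w\in W$), with the convention $(+\infty)+(-\infty)=(-\infty)+(+\infty)=(+\infty)-(+\infty)=(-\infty)-(-\infty)=-\infty$ (also used in the dual objective). The c-subdifferential of $g$ at $x_0$ is $\partial_c g(x_0):=\{(x^*,y^*,\alpha)\in W:\ \langle x_0,y^*\rangle<\alpha,\ g(x)-g(x_0)\ge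 c(x,(x^*,y^*,\alpha))-c(x_0,(x^*,y^*,\alpha))\ \text{for all } x\in X\}$. $\mathbb{R}^{(T)}_+$ is the set of families $\lambda=(\lambda_t)_{t\in T}$ with $\lambda_t\ge0$ and only finitely many $\lambda_t\neq0$, and $\lambda h:=\sum_{t:\lambda_t\ne0}\lambda_t h_t$. By convention $f(x)-g(x)=+\infty$ whenever $x\notin\operatorname{dom} f$. $v(\cdot)$ denotes optimal value; $(P)$ is solvable if its infimum is attained. *)

From HB Require Import structures.
From mathcomp Require Import all_boot all_order all_algebra.
From mathcomp Require Import all_classical all_reals all_analysis.
Set Implicit Arguments. Unset Strict Implicit. Unset Printing Implicit Defensive.
Import Order.TTheory GRing.Theory Num.Theory.
Import numFieldNormedType.Exports.
Local Open Scope classical_set_scope.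
Local Open Scope ring_scope.

Section Defs.
Context {R : realType} {X : tvsType R}.

Definition in_dual (f : X -> R) : Prop :=
  (forall (a : R) (x y : X), f (a *: x + y) = a * f x + f y) /\ continuous f.

(* the topology of X is sigma(X, X^* ): every neighbourhood of x contains a
   basic weak neighbourhood (the converse inclusion holds automatically since
   elements of X^* are continuous) *)
Definition has_weak_topology : Prop :=
  forall (x : X) (U : set X), nbhs x U ->
    exists (n : nat) (fs : 'I_n -> X -> R), (forall i, in_dual (fs i)) /\
      exists2 e : R, 0 < e &
        [set y | forall i, `|fs i y - fs i x| < e] `<=` U.

Definition Wty := ((X -> R) * (X -> R) * R)%type.
Definition inW (w : Wty) : Prop := in_dual w.1.1 /\ in_dual w.1.2.

Definition coupling (x : X) (w : Wty) : \bar R :=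
  if w.1.2 x < w.2 then (w.1.1 x)%:E else +oo%E.

(* c-conjugate (the ereal subtraction of mathcomp follows the stated
   convention: +oo + -oo = -oo + +oo = -oo) *)
Definition cconj (phi : X -> \bar R) (w : Wty) : \bar R :=
  ereal_sup (range (fun x => (coupling x w - phi x)%E)).

Definition csubdiff (g : X -> \bar R) (x0 : X) : set Wty :=
  [set w | inW w /\ w.1.2 x0 < w.2 /\
     forall x, (coupling x w - coupling x0 w <= g x - g x0)%E].

Definition proper_efun (phi : X -> \bar R) : Prop :=
  (forall x, phi x <> -oo%E) /\ exists x, phi x <> +oo%E.

Definition convex_efun (phi : X -> \bar R) : Prop :=
  forall (x y : X) (t : R), 0 < t < 1 ->
    (phi (t *: x + (1 - t) *: y)%R <= t%:E * phi x + (1 - t)%:E * phi y)%E.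

Context {T : Type}.

Definition multipliers : set (T -> R) :=
  [set l | (forall t, 0 <= l t) /\ finite_set [set t | l t != 0]].

Definition lagr (f : X -> \bar R) (h : T -> X -> \bar R) (l : T -> R) :
  X -> \bar R :=
  fun x => (f x + \sum_(t \in [set t : {classic T} | l t != 0%R]) ((l t)%:E * h t x))%E.

Definition feasible (h : T -> X -> \bar R) : set X :=
  [set x | forall t, (h t x <= 0)%E].

(* objective f - g, with f(x) - g(x) = +oo outside dom f *)
Definition objP (f g : X -> \bar R) (x : X) : \bar R :=
  if f x == +oo%E then +oo%E else (f x - g x)%E.

Definition val_P (f g : X -> \bar R) (h : T -> X -> \bar R) : \bar R :=
  ereal_inf (objP f g @` feasible h).

Definition solvable_P (f g : X -> \bar R) (h : T -> X -> \bar R) (x0 : X) : Prop :=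
  feasible h x0 /\ objP f g x0 = val_P f g h.

Definition val_DL (f g : X -> \bar R) (h : T -> X -> \bar R) : \bar R :=
  ereal_sup ((fun l => ereal_inf
     ((fun w => (cconj g w - cconj (lagr f h l) w)%E) @` inW)) @` multipliers).

End Defs.

From HB Require Import structures.
From mathcomp Require Import all_boot all_order all_algebra.
From mathcomp Require Import all_classical all_reals all_analysis.
From mathcomp Require Import lra.
Import Order.TTheory GRing.Theory Num.Theory.
Import numFieldNormedType.Exports.
Local Open Scope classical_set_scope.
Local Open Scope ring_scope.

(** At an optimal solution [x0] with a c-subgradient [w] of [g], the
    Fenchel-Young inequality becomes an equality:
    [g^c(w) = c(x0,w) - g(x0)].  For every multiplier [l], feasibility of [x0]
    gives [(f + l h)(x0) <= f(x0)], so [(f + l h)^c(w) >= c(x0,w) - f(x0)] and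
    [g^c(w) - (f + l h)^c(w) <= f(x0) - g(x0) = v(P)]. *)

Section WeakDuality.
Context {R : realType} {X : tvsType R}.
Local Open Scope ereal_scope.

Lemma coupling_neqNy (x : X) (w : Wty) : coupling x w != -oo.
Proof. by rewrite /coupling; case: ifP. Qed.

Lemma coupling_csubdiff {g : X -> \bar R} {x0 : X} {w : Wty} :
  csubdiff g x0 w -> coupling x0 w = (w.1.1 x0)%:E.
Proof. by move=> [_ [wlt _]]; rewrite /coupling wlt. Qed.

Lemma fin_num_csubdiff {g : X -> \bar R} {x0 : X} :
  proper_efun g -> csubdiff g x0 !=set0 -> g x0 \is a fin_num.
Proof.
move=> [gNy [x gx]] [w wg]; rewrite fin_numE; apply/andP; split; apply/eqP.
  exact: gNy.
(* at a point [x] of [dom g], [g x0 = +oo] would force [c(x,w) - c(x0,w) = -oo] *)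
move=> gx0; have := wg.2.2 x; rewrite (coupling_csubdiff wg) gx0.
move: (gNy x) gx (coupling_neqNy x w).
by case: (g x) => // r _ _; case: (coupling x w).
Qed.

Lemma cconj_csubdiff {g : X -> \bar R} {x0 : X} {w : Wty} :
  csubdiff g x0 w -> g x0 \is a fin_num -> cconj g w = coupling x0 w - g x0.
Proof.
move=> wg gx0; apply/eqP; rewrite eq_le; apply/andP; split; last first.
  by apply: ereal_sup_ubound; exists x0.
apply: ge_ereal_sup => _ [x _ <-].
move: wg.2.2 (coupling_neqNy x w); rewrite (coupling_csubdiff wg).
move=> /(_ x); move: gx0; case: (g x0) => // b _.
case: (coupling x w) => [a| |//]; case: (g x) => [c| |] //=.
- by rewrite -!EFinB !lee_fin => ? _; lra.
- by rewrite leNye.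
- by rewrite leNye.
Qed.

Context {T : Type}.

Lemma lagr_le_feasible (f : X -> \bar R) (h : T -> X -> \bar R) (l : T -> R)
    (x : X) :
  (forall t, (0 <= l t)%R) -> feasible h x -> lagr f h l x <= f x.
Proof.
move=> l0 hx; rewrite /lagr -[leRHS]adde0 leeD2l//.
by apply: fsume_le0 => t _; apply: mule_ge0_le0; rewrite ?lee_fin.
Qed.

Lemma dual_objective_le_objP {f g : X -> \bar R} {h : T -> X -> \bar R}
    {l : T -> R} {x0 : X} {w : Wty} :
  (forall x, f x <> -oo) -> (forall t, (0 <= l t)%R) -> feasible h x0 ->
  csubdiff g x0 w -> g x0 \is a fin_num ->
  cconj g w - cconj (lagr f h l) w <= objP f g x0.
Proof.
move=> fNy l0 hx0 wg gx0; rewrite /objP; case: ifPn => [_|fx0]; first exact: leey.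
have fx0_fin : f x0 \is a fin_num by rewrite fin_numE fx0 andbT; apply/eqP.
have young : coupling x0 w - f x0 <= cconj (lagr f h l) w.
  apply: le_trans (ereal_sup_ubound _) => /=; last by exists x0.
  by apply: leeB => //; exact: lagr_le_feasible.
rewrite (cconj_csubdiff wg gx0); apply: le_trans (leeB (lexx _) young) _.
rewrite (coupling_csubdiff wg).
move: gx0 fx0_fin; case: (g x0) => // b _; case: (f x0) => // a _.
by rewrite -!EFinB lee_fin; lra.
Qed.

End WeakDuality.

Theorem corollary4p2 (R : realType) (X : tvsType R) (T : Type)
  (f g : X -> \bar R) (h : T -> X -> \bar R) :
  hausdorff_space X ->
  @has_weak_topology R X ->
  (exists x : X, x != 0) ->
  proper_efun f -> convex_efun f ->
  proper_efun g -> convex_efun g ->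
  (forall t, proper_efun (h t) /\ convex_efun (h t)) ->
  (exists x0 : X, solvable_P f g h x0 /\ csubdiff g x0 !=set0) ->
  (val_DL f g h <= val_P f g h)%E.
Proof.
move=> _ _ _ [fNy _] _ gproper _ _ [x0 [[hx0 opt] gsub]].
have gx0 := fin_num_csubdiff gproper gsub.
have [w wg] := gsub.
rewrite -opt; apply: ge_ereal_sup => _ [l [l0 _] <-].
apply: le_trans (dual_objective_le_objP fNy l0 hx0 wg gx0).
by apply: ereal_inf_lbound; exists w; first exact: wg.1.
Qed.
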